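(* Let $n\ge 2$ be an integer and set, for real $r$ with $|r|>1$, $\rho(r)=r-\frac{|r|}{r}\sqrt{r^2-1}$. Then for every real $r$ with $|r|>1$, $$\int_{-1}^1 \frac{T_n(s)(1-s^2)^{\frac{3}{2}}}{(s-r)^3}\,ds = \frac{\pi}{4}\left\{\rho(r)^{n+1}\left[(n^2+2n+3)-3(n+1)\frac{|r|}{\sqrt{r^2-1}}\right]-\rho(r)^{n-1}\left[(n^2-2n+3)-3(n-1)\frac{|r|}{\sqrt{r^2-1}}\right]\right\}.$$
   Context: $T_k(s)=\cos(k\cos^{-1}s)$ is the Tchebyshev polynomial of the first kind. Since $|r|>1$, the integral is an ordinary (nonsingular) integral. *)

From Stdlib Require Import Reals.
From Coquelicot Require Import Coquelicot.
Open Scope R_scope.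

Definition chebT (k : nat) (s : R) : R := cos (INR k * acos s).

Definition rho (r : R) : R := r - (Rabs r / r) * sqrt (r ^ 2 - 1).

(* (1 - s^2)^(3/2), written as (1 - s^2) * sqrt(1 - s^2) (nonneg base on [-1,1]). *)
Definition pow3half (x : R) : R := x * sqrt x.

From Stdlib Require Import Reals Lra Lia Psatz.
From Coquelicot Require Import Coquelicot.
Open Scope R_scope.

(* The substitution s = cos t turns T_n(s) (1 - s^2)^(3/2) ds into cos(n t) sin^4 t dt, and
   two integrations by parts lower the pole (cos t - r)^-3 to a simple pole, leaving the
   moments  int_0^pi cos(k t) / (cos t - r) dt  for k = n - 2, n, n + 2.  Writing
   r = (p^2 + 1) / (2 p) with p = rho(r), |p| < 1, the Poisson integral gives the moment
   k = 0, and the recurrence of cos(k t) shows that the k-th moment is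
   -2 pi p^(k+1) / (1 - p^2).  For the substitution T_n is replaced by the Chebyshev
   polynomial [cheb_poly n], which agrees with it on [-1, 1] and is continuous. *)

Lemma nat_ind2 (P : nat -> Prop) :
  P 0%nat -> P 1%nat -> (forall k, P k -> P (S k) -> P (S (S k))) -> forall k, P k.
Proof.
  intros H0 H1 HS k.
  enough (H : P k /\ P (S k)) by apply H.
  induction k as [|k [IHk IHSk]]; auto.
Qed.

Fixpoint cheb_poly (k : nat) (s : R) : R :=
  match k with
  | 0 => 1
  | 1 => s
  | S (S k'' as k') => 2 * s * cheb_poly k' s - cheb_poly k'' s
  end.

Lemma cos_INR_SS_mul k t :
  cos (INR (S (S k)) * t) = 2 * cos t * cos (INR (S k) * t) - cos (INR k * t).
Proof.
  replace (INR (S (S k)) * t) with (INR (S k) * t + t) by (rewrite (S_INR (S k)); ring).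
  replace (INR k * t) with (INR (S k) * t - t) by (rewrite (S_INR k); ring).
  rewrite cos_plus, cos_minus. ring.
Qed.

Lemma cheb_poly_cos k t : cheb_poly k (cos t) = cos (INR k * t).
Proof.
  induction k as [| |k IHk IHSk] using nat_ind2.
  - simpl. rewrite Rmult_0_l, cos_0. reflexivity.
  - simpl. rewrite Rmult_1_l. reflexivity.
  - rewrite cos_INR_SS_mul, <- IHk, <- IHSk. reflexivity.
Qed.

Lemma ex_derive_cheb_poly k s : ex_derive (cheb_poly k) s.
Proof.
  induction k as [| |k IHk IHSk] using nat_ind2; simpl; try (auto_derive; exact I).
  change (ex_derive (fun s => 2 * s * cheb_poly (S k) s - cheb_poly k s) s).
  auto_derive. tauto.
Qed.

Lemma chebT_cheb_poly k s : -1 <= s <= 1 -> chebT k s = cheb_poly k s.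
Proof.
  intros Hs. unfold chebT. rewrite <- cheb_poly_cos, cos_acos by exact Hs. reflexivity.
Qed.

Lemma continuous_cheb_integrand n r s : s - r <> 0 ->
  continuous (fun s => cheb_poly n s * pow3half (1 - s ^ 2) / (s - r) ^ 3) s.
Proof.
  intros Hs. unfold pow3half.
  apply (continuous_mult (fun s => cheb_poly n s * ((1 - s ^ 2) * sqrt (1 - s ^ 2)))).
  - apply (continuous_mult (cheb_poly n)).
    + apply (ex_derive_continuous (V := R_NormedModule)), ex_derive_cheb_poly.
    + apply (continuous_mult (fun s => 1 - s ^ 2)).
      * apply (ex_derive_continuous (V := R_NormedModule)). auto_derive. exact I.
      * apply (continuous_sqrt_comp (fun s => 1 - s ^ 2)).
        apply (ex_derive_continuous (V := R_NormedModule)). auto_derive. exact I.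
  - apply (ex_derive_continuous (V := R_NormedModule)). auto_derive.
    repeat split; repeat apply Rmult_integral_contrapositive_currified; auto with real.
Qed.

Lemma pow3half_sin t : 0 <= t <= PI -> pow3half (1 - cos t ^ 2) = sin t ^ 3.
Proof.
  intros Ht. unfold pow3half.
  replace (1 - cos t ^ 2) with (sin t ^ 2) by (rewrite <- (sin2_cos2 t); unfold Rsqr; ring).
  rewrite sqrt_pow2 by (apply sin_ge_0; lra). ring.
Qed.

Lemma is_RInt_0_PI_congr (f g : R -> R) (l l' : R) :
  (forall t, 0 < t < PI -> f t = g t) -> l = l' -> is_RInt f 0 PI l -> is_RInt g 0 PI l'.
Proof.
  intros Hfg <- Hf. apply (is_RInt_ext f); [| exact Hf].
  rewrite Rmin_left, Rmax_right by (pose proof PI_RGT_0; lra). exact Hfg.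
Qed.

Lemma is_RInt_0_PI_primitive (F f : R -> R) (l : R) :
  (forall t, is_derive F t (f t)) -> (forall t, continuous f t) -> F PI - F 0 = l ->
  is_RInt f 0 PI l.
Proof.
  intros HF Hf <-. apply (is_RInt_derive F f); intros t _; [apply HF | apply Hf].
Qed.

Lemma is_RInt_lincomb (f g : R -> R) (a b lf lg u v : R) :
  is_RInt f a b lf -> is_RInt g a b lg ->
  is_RInt (fun t => u * f t + v * g t) a b (u * lf + v * lg).
Proof.
  intros Hf Hg.
  exact (is_RInt_plus _ _ _ _ _ _ (is_RInt_scal _ _ _ u _ Hf) (is_RInt_scal _ _ _ v _ Hg)).
Qed.

Lemma RInt_cos_subst (f : R -> R) (l : R) :
  (forall t, 0 <= t <= PI -> continuous f (cos t)) ->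
  is_RInt (fun t => f (cos t) * sin t) 0 PI l -> RInt f (-1) 1 = l.
Proof.
  intros Hf Hl.
  assert (Hsub : is_RInt (fun t => scal (- sin t) (f (cos t))) PI 0 (RInt f (cos PI) (cos 0))).
  { apply (is_RInt_comp f cos (fun t => - sin t)).
    - intros t Ht. apply Hf. rewrite Rmin_right, Rmax_left in Ht by (pose proof PI_RGT_0; lra).
      exact Ht.
    - intros t _. split.
      + auto_derive; [exact I | ring].
      + apply (ex_derive_continuous (V := R_NormedModule)). auto_derive. exact I. }
  rewrite cos_PI, cos_0 in Hsub.
  apply is_RInt_swap, is_RInt_opp in Hsub. rewrite opp_opp in Hsub.
  apply (is_RInt_unique (fun t => f (cos t) * sin t) 0 PI) in Hl.
  rewrite <- Hl. symmetry. apply is_RInt_unique.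
  eapply is_RInt_ext; [| exact Hsub].
  intros t _. unfold opp, scal; simpl; unfold mult; simpl. ring.
Qed.

Lemma is_RInt_cos_mul a : a <> 0 -> is_RInt (fun t => cos (a * t)) 0 PI (sin (a * PI) / a).
Proof.
  intros Ha. apply (is_RInt_0_PI_primitive (fun t => sin (a * t) / a)).
  - intros t. auto_derive; [exact I | field; exact Ha].
  - intros t. apply (ex_derive_continuous (V := R_NormedModule)). auto_derive. exact I.
  - rewrite Rmult_0_r, sin_0. field. exact Ha.
Qed.

Lemma is_RInt_cos_INR_S_mul k : is_RInt (fun t => cos (INR (S k) * t)) 0 PI 0.
Proof.
  assert (Hsin : sin (INR (S k) * PI) = 0).
  { apply sin_eq_0_1. exists (Z.of_nat (S k)). rewrite <- INR_IZR_INZ. reflexivity. }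
  assert (Hk : INR (S k) <> 0) by (apply not_0_INR; lia).
  pose proof (is_RInt_cos_mul _ Hk) as H. rewrite Hsin, Rdiv_0_l in H. exact H.
Qed.

Lemma one_sub_mul_cos_pos p t : -1 < p < 1 -> 0 < 1 - p * cos t.
Proof. intros Hp. pose proof (COS_bound t). destruct (Rle_dec 0 p); nra. Qed.

Lemma poisson_denom_pos p t : -1 < p < 1 -> 0 < 1 - 2 * p * cos t + p ^ 2.
Proof.
  intros Hp. pose proof (COS_bound t). pose proof (one_sub_mul_cos_pos p t Hp).
  assert (0 <= p ^ 2 * (1 - cos t ^ 2)) by (apply Rmult_le_pos; nra).
  nra.
Qed.

(* Unlike the primitive obtained from the substitution u = tan (t / 2), this one has no
   singularity at t = PI. *)
Lemma is_RInt_poisson_kernel p : -1 < p < 1 ->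
  is_RInt (fun t => (1 - p ^ 2) / (1 - 2 * p * cos t + p ^ 2)) 0 PI PI.
Proof.
  intros Hp.
  apply (is_RInt_0_PI_primitive (fun t => t + 2 * atan (p * sin t / (1 - p * cos t)))).
  - intros t. pose proof (one_sub_mul_cos_pos p t Hp) as Hc.
    auto_derive; [lra |].
    assert (Hsq : sin t ^ 2 = 1 - cos t ^ 2) by (rewrite <- (sin2_cos2 t); unfold Rsqr; ring).
    pose proof (poisson_denom_pos p t Hp) as Hd.
    set (c := cos t) in *. set (s := sin t) in *.
    field_simplify_eq; [rewrite Hsq; ring |].
    replace ((1 + - (p * c)) * (1 + - (p * c)) + p * s * (p * s)) with (1 - 2 * p * c + p ^ 2)
      by (replace (p * s * (p * s)) with (p ^ 2 * s ^ 2) by ring; rewrite Hsq; ring).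
    repeat split; lra.
  - intros t. apply (ex_derive_continuous (V := R_NormedModule)).
    auto_derive. pose proof (poisson_denom_pos p t Hp). lra.
  - rewrite sin_PI, sin_0, cos_PI, cos_0, !Rmult_0_r, !Rdiv_0_l, atan_0. ring.
Qed.

Definition cube_pole_weight (a t : R) : R :=
  - (a ^ 2 / 2) * cos (a * t) + (a + 3) * (a + 2) / 4 * cos ((a + 2) * t)
  + (a - 3) * (a - 2) / 4 * cos ((a - 2) * t).

Lemma cube_pole_weight_eq a t :
  cube_pole_weight a t =
  3 * (cos (a * t) * (cos t ^ 2 - sin t ^ 2) - a * sin (a * t) * sin t * cos t)
  - a * (a * cos (a * t) * sin t ^ 2 + 2 * sin (a * t) * sin t * cos t).
Proof.
  unfold cube_pole_weight.
  replace ((a + 2) * t) with (a * t + 2 * t) by ring.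
  replace ((a - 2) * t) with (a * t - 2 * t) by ring.
  rewrite cos_plus, cos_minus, cos_2a_sin, sin_2a.
  replace (cos t ^ 2) with (1 - sin t ^ 2) by (rewrite <- (sin2_cos2 t); unfold Rsqr; ring).
  field.
Qed.

(* Two integrations by parts, against [d/dt (cos t - r)^-2 = 2 sin t / (cos t - r)^3] and
   then [d/dt (cos t - r)^-1 = sin t / (cos t - r)^2]; the boundary terms carry a factor
   [sin t], and [cube_pole_weight_eq] identifies the remaining integrand. *)
Lemma is_RInt_cos_sin4_div_cube_reduction (a r l : R) :
  (forall t, cos t - r <> 0) ->
  is_RInt (fun t => cube_pole_weight a t / (cos t - r)) 0 PI l ->
  is_RInt (fun t => cos (a * t) * sin t ^ 4 / (cos t - r) ^ 3) 0 PI (l / 2).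
Proof.
  intros Hcr Hl.
  assert (Hparts : is_RInt (fun t => cos (a * t) * sin t ^ 4 / (cos t - r) ^ 3
                                     - / 2 * (cube_pole_weight a t / (cos t - r))) 0 PI 0).
  { apply (is_RInt_0_PI_primitive (fun t => sin t / 2 *
      (cos (a * t) * sin t ^ 2 / (cos t - r) ^ 2
       + (a * sin (a * t) * sin t - 3 * cos (a * t) * cos t) / (cos t - r)))).
    - intros t. pose proof (Hcr t).
      auto_derive; [repeat split; auto |].
      rewrite cube_pole_weight_eq. field. auto.
    - intros t. apply (ex_derive_continuous (V := R_NormedModule)). unfold cube_pole_weight.
      pose proof (Hcr t). auto_derive.
      repeat split; repeat apply Rmult_integral_contrapositive_currified; auto with real.
    - rewrite sin_PI, sin_0. unfold Rdiv. ring. }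
  pose proof (is_RInt_lincomb _ _ _ _ _ _ 1 (/ 2) Hparts Hl) as H.
  eapply is_RInt_0_PI_congr; [| | exact H]; [intros t _; cbv beta; ring | field].
Qed.

Section PoissonMoments.

Variables p r : R.
Hypothesis Hp : -1 < p < 1.
Hypothesis Hp0 : p <> 0.
Hypothesis Hr : r = (p ^ 2 + 1) / (2 * p).

Lemma cos_sub_joukowski t : cos t - r = - (1 - 2 * p * cos t + p ^ 2) / (2 * p).
Proof. rewrite Hr. field. exact Hp0. Qed.

Lemma cos_sub_neq0 t : cos t - r <> 0.
Proof.
  rewrite cos_sub_joukowski. pose proof (poisson_denom_pos p t Hp).
  unfold Rdiv. apply Rmult_integral_contrapositive_currified; [lra |].
  apply Rinv_neq_0_compat, Rmult_integral_contrapositive_currified; lra.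
Qed.

(* The moments satisfy the three-term recurrence of [cos (k t)], and [p] is a root of
   [X^2 - 2 r X + 1]. *)
Lemma is_RInt_cos_mul_div_cos_sub k :
  is_RInt (fun t => cos (INR k * t) / (cos t - r)) 0 PI (-2 * PI * p ^ S k / (1 - p ^ 2)).
Proof.
  assert (Hp2 : 1 - p * p <> 0) by nra.
  assert (Hcr := cos_sub_neq0).
  assert (H0 : is_RInt (fun t => cos (INR 0 * t) / (cos t - r)) 0 PI
                       (-2 * PI * p ^ 1 / (1 - p ^ 2))).
  { pose proof (is_RInt_scal _ _ _ (-2 * p / (1 - p ^ 2)) _ (is_RInt_poisson_kernel p Hp)) as H.
    eapply is_RInt_0_PI_congr; [| | exact H].
    - intros t _. unfold scal; simpl; unfold mult; simpl.
      rewrite Rmult_0_l, cos_0, cos_sub_joukowski.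
      pose proof (poisson_denom_pos p t Hp). field. repeat split; lra.
    - unfold scal; simpl; unfold mult; simpl. field. exact Hp2. }
  induction k as [| |k IHk IHSk] using nat_ind2.
  - exact H0.
  - pose proof (is_RInt_lincomb _ _ _ _ _ _ 1 r (is_RInt_const 0 PI 1) H0) as H.
    eapply is_RInt_0_PI_congr; [| | exact H].
    + intros t _. unfold scal; simpl; unfold mult; simpl.
      rewrite !Rmult_1_l, Rmult_0_l, cos_0. field. apply Hcr.
    + unfold scal; simpl; unfold mult; simpl. rewrite Hr. field. split; assumption.
  - pose proof (is_RInt_lincomb _ _ _ _ _ _ 2 (2 * r) (is_RInt_cos_INR_S_mul k) IHSk) as H.
    pose proof (is_RInt_lincomb _ _ _ _ _ _ 1 (-1) H IHk) as H'.
    eapply is_RInt_0_PI_congr; [| | exact H'].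
    + intros t _. rewrite cos_INR_SS_mul. field. apply Hcr.
    + rewrite Hr. simpl. field. split; assumption.
Qed.

Lemma is_RInt_cos_INR_mul_sin4_div_cube n : (2 <= n)%nat ->
  is_RInt (fun t => cos (INR n * t) * sin t ^ 4 / (cos t - r) ^ 3) 0 PI
    (PI / 4 *
     ( p ^ (n + 1) *
         ((INR n ^ 2 + 2 * INR n + 3) - 3 * (INR n + 1) * ((p ^ 2 + 1) / (1 - p ^ 2)))
     - p ^ (n - 1) *
         ((INR n ^ 2 - 2 * INR n + 3) - 3 * (INR n - 1) * ((p ^ 2 + 1) / (1 - p ^ 2))))).
Proof.
  intros Hn.
  pose proof (is_RInt_cos_mul_div_cos_sub n) as Kn.
  pose proof (is_RInt_cos_mul_div_cos_sub (n + 2)) as Kp.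
  replace (INR (n + 2)) with (INR n + 2) in Kp by (rewrite plus_INR; simpl; ring).
  pose proof (is_RInt_cos_mul_div_cos_sub (n - 2)) as Km.
  replace (INR (n - 2)) with (INR n - 2) in Km by (rewrite minus_INR by lia; simpl; ring).
  pose proof (is_RInt_lincomb _ _ _ _ _ _
                (- (INR n ^ 2 / 2)) ((INR n + 3) * (INR n + 2) / 4) Kn Kp) as H.
  pose proof (is_RInt_lincomb _ _ _ _ _ _ 1 ((INR n - 3) * (INR n - 2) / 4) H Km) as Hw.
  eapply is_RInt_0_PI_congr; [intros t _; reflexivity | |
    apply is_RInt_cos_sin4_div_cube_reduction;
    [apply cos_sub_neq0 | eapply is_RInt_0_PI_congr; [| reflexivity | exact Hw]]].
  - assert (Hp2 : 1 - p ^ 2 <> 0) by nra.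
    replace (S n) with (n - 2 + 3)%nat by lia.
    replace (S (n + 2)) with (n - 2 + 5)%nat by lia.
    replace (S (n - 2)) with (n - 2 + 1)%nat by lia.
    replace (n + 1)%nat with (n - 2 + 3)%nat by lia.
    replace (n - 1)%nat with (n - 2 + 1)%nat by lia.
    rewrite !pow_add. field. exact Hp2.
  - intros t _. unfold cube_pole_weight. field. apply cos_sub_neq0.
Qed.

End PoissonMoments.

Section Rho.

Variable r : R.
Hypothesis Hr : 1 < Rabs r.

Lemma sqrt_sq_sub1_spec : 0 < sqrt (r ^ 2 - 1) /\ sqrt (r ^ 2 - 1) ^ 2 = r ^ 2 - 1.
Proof.
  assert (H : 0 < r ^ 2 - 1) by (unfold Rabs in Hr; destruct (Rcase_abs r); nra).
  split; [apply sqrt_lt_R0 | apply pow2_sqrt]; lra.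
Qed.

Lemma rho_cases :
  (1 < r /\ Rabs r = r /\ rho r = r - sqrt (r ^ 2 - 1))
  \/ (r < -1 /\ Rabs r = - r /\ rho r = r + sqrt (r ^ 2 - 1)).
Proof.
  unfold rho, Rabs in *. destruct (Rcase_abs r); [right | left];
    (split; [lra | split; [reflexivity | field; lra]]).
Qed.

Lemma rho_bounds : -1 < rho r < 1 /\ rho r <> 0.
Proof.
  destruct sqrt_sq_sub1_spec as [HS HS2].
  destruct rho_cases as [(Hr1 & _ & ->) | (Hr1 & _ & ->)]; repeat split; nra.
Qed.

Lemma joukowski_rho : r = (rho r ^ 2 + 1) / (2 * rho r).
Proof.
  destruct sqrt_sq_sub1_spec as [HS HS2]. destruct rho_bounds as [_ Hp0].
  destruct rho_cases as [(Hr1 & _ & E) | (Hr1 & _ & E)]; rewrite E in *;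
    field_simplify_eq; auto; nra.
Qed.

Lemma Rabs_div_sqrt_rho : Rabs r / sqrt (r ^ 2 - 1) = (rho r ^ 2 + 1) / (1 - rho r ^ 2).
Proof.
  destruct sqrt_sq_sub1_spec as [HS HS2]. destruct rho_bounds as [Hp _].
  assert (Hp2 : 1 - rho r ^ 2 <> 0) by nra.
  destruct rho_cases as [(Hr1 & -> & E) | (Hr1 & -> & E)]; rewrite E in *;
    field_simplify_eq; auto; nra.
Qed.

End Rho.

Theorem mainTheorem13 (n : nat) (r : R) :
  (2 <= n)%nat -> 1 < Rabs r ->
  RInt (fun s => chebT n s * pow3half (1 - s ^ 2) / (s - r) ^ 3) (-1) 1
  = PI / 4 *
    ( rho r ^ (n + 1) *
        ((INR n ^ 2 + 2 * INR n + 3) - 3 * (INR n + 1) * (Rabs r / sqrt (r ^ 2 - 1)))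
    - rho r ^ (n - 1) *
        ((INR n ^ 2 - 2 * INR n + 3) - 3 * (INR n - 1) * (Rabs r / sqrt (r ^ 2 - 1)))).
Proof.
  intros Hn Hr.
  destruct (rho_bounds r Hr) as [Hp Hp0].
  pose proof (joukowski_rho r Hr) as Hrp.
  pose proof (cos_sub_neq0 _ _ Hp Hp0 Hrp) as Hcr.
  rewrite (Rabs_div_sqrt_rho r Hr).
  rewrite (RInt_ext _ (fun s => cheb_poly n s * pow3half (1 - s ^ 2) / (s - r) ^ 3)).
  2: { intros s Hs. rewrite Rmin_left, Rmax_right in Hs by lra.
       rewrite chebT_cheb_poly by lra. reflexivity. }
  apply RInt_cos_subst; [intros t _; apply continuous_cheb_integrand, Hcr |].
  eapply is_RInt_0_PI_congr;
    [| reflexivity | exact (is_RInt_cos_INR_mul_sin4_div_cube _ _ Hp Hp0 Hrp n Hn)].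
  intros t Ht. rewrite cheb_poly_cos, pow3half_sin by lra. field. apply Hcr.
Qed.
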